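(* Let $M(k,l,m,n)=\langle x,y \mid y^m=x^l,\ x^n=1,\ y^{-1}xy=x^k\rangle$ be a metacyclic group, where $\gcd(n,k)=1$, $k^m\equiv 1 \pmod n$ and $l(k-1)\equiv 0\pmod n$. Let $I$ be a set of integers containing exactly one representative of each orbit of the action of $K=\langle y\rangle$ on $\mathbb{Z}/n$ given by $y\cdot u=ku$, and for $a\in I$ let $Ka=\{ak^i \bmod n: i\ge 0\}$. For $a,b,c\in I$ let $S(a,b,c)=|\{(r,s)\in Ka\times Kb : r+s\equiv c\pmod n\}|$. If $a,b,c\in I$ satisfy $S(a,b,c)\neq 0$, then $$\Big\{\frac{al}{n}\Big\}+\Big\{\frac{bl}{n}\Big\}-\Big\{\frac{cl}{n}\Big\}$$ is an integer, where $\{t\}$ denotes the fractional part of $t$. *)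

From mathcomp Require Import all_boot all_order all_algebra.
From mathcomp Require Import boolp.
Set Implicit Arguments. Unset Strict Implicit. Unset Printing Implicit Defensive.
Import Order.TTheory GRing.Theory Num.Theory.
Local Open Scope ring_scope.

Definition Korbit (n : nat) (k a : int) : {set 'I_n} :=
  [set r : 'I_n | `[< exists i : nat, (r%:Z = (a * k ^+ i) %% n%:Z)%Z >]].

Definition Scount (n : nat) (k a b c : int) : nat :=
  #|[set rs : 'I_n * 'I_n |
      [&& rs.1 \in Korbit n k a, rs.2 \in Korbit n k b &
          (((rs.1 : nat) + (rs.2 : nat))%:Z == c %[mod n%:Z])%Z]]|.

Definition orbit_transversal (n : nat) (k : int) (I : int -> Prop) : Prop :=
  forall u : int, exists! a : int,
    I a /\ exists i : nat, (u = a * k ^+ i %[mod n%:Z])%Z.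

Definition frac_part (t : rat) : rat := t - (Num.floor t)%:~R.

(* The map u |-> u l (mod n) is constant on the K-orbits, because
   l k - l = l (k - 1) is divisible by n.  Hence a solution r + s = c with
   r in Ka and s in Kb gives a l + b l = c l (mod n), so al/n + bl/n - cl/n is
   an integer, and so is the same combination of fractional parts.  Only the
   condition l (k - 1) = 0 (mod n) is used. *)

From mathcomp Require Import all_boot all_order all_algebra.
From mathcomp Require Import boolp ring.
Import Order.TTheory GRing.Theory Num.Theory.
Local Open Scope ring_scope.

Lemma dvdz_mul_expr_sub1 {d l k : int} (i : nat) :
  (d %| l * (k - 1))%Z -> (d %| l * (k ^+ i - 1))%Z.
Proof. by move=> dvd_l; rewrite subrX1 mulrA dvdz_mulr. Qed.

Lemma Korbit_mulr_eqz {n : nat} {k l a : int} {r : 'I_n} :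
  (n%:Z %| l * (k - 1))%Z -> r \in Korbit n k a ->
  (r%:Z * l = a * l %[mod n%:Z])%Z.
Proof.
move=> dvd_l; rewrite inE => /asboolP [i ->].
apply/eqP; rewrite modzMml eqz_mod_dvd.
have -> : a * k ^+ i * l - a * l = a * (l * (k ^+ i - 1)) by ring.
by rewrite dvdz_mull // dvdz_mul_expr_sub1.
Qed.

Lemma Scount_neq0_dvdz {n : nat} {k l a b c : int} :
  (n%:Z %| l * (k - 1))%Z -> Scount n k a b c <> 0%N ->
  (n%:Z %| a * l + b * l - c * l)%Z.
Proof.
move=> dvd_l /eqP; rewrite -lt0n => /card_gt0P [[r s]].
rewrite inE /= => /and3P [r_orb s_orb /eqP rs_c].
rewrite -eqz_mod_dvd -(modzDm (a * l)).
rewrite -(Korbit_mulr_eqz dvd_l r_orb) -(Korbit_mulr_eqz dvd_l s_orb) modzDm.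
by rewrite -mulrDl -modzMml -PoszD rs_c modzMml.
Qed.

Lemma frac_part_addB_int {s t u : rat} (z : int) :
  s + t - u = z%:~R ->
  exists w : int, frac_part s + frac_part t - frac_part u = w%:~R.
Proof.
move=> stu_z; exists (z - Num.floor s - Num.floor t + Num.floor u).
by rewrite /frac_part !(intrD, intrB) -stu_z; ring.
Qed.

Theorem mainTheorem2 (k l : int) (m n : nat) (I : int -> Prop)
  (hn : (0 < n)%N)
  (hcop : coprimez n%:Z k)
  (hkm : (k ^+ m = 1 %[mod n%:Z])%Z)
  (hl : (l * (k - 1) = 0 %[mod n%:Z])%Z)
  (hI : orbit_transversal n k I)
  (a b c : int) (ha : I a) (hb : I b) (hc : I c)
  (hS : Scount n k a b c <> 0%N) :
  exists z : int,
    frac_part (((a * l)%:~R : rat) / n%:R) + frac_part (((b * l)%:~R : rat) / n%:R)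
      - frac_part (((c * l)%:~R : rat) / n%:R) = z%:~R :> rat.
Proof.
have dvd_l : (n%:Z %| l * (k - 1))%Z by apply/dvdz_mod0P; rewrite hl mod0z.
have /dvdzP [q abc_q] := Scount_neq0_dvdz dvd_l hS.
apply: (frac_part_addB_int q).
have n_neq0 : (n%:R : rat) != 0 by rewrite pnatr_eq0 -lt0n.
apply: (mulIf n_neq0); rewrite -[q%:~R * _](intrM _ q n) -abc_q !(intrD, intrB).
by field.
Qed.
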